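(* Let $L\ge 1$ and consider an $L$-layer linear self-attention (LSA) network. For $l=0,1,\dots,L$ let $W^{PV,(l)},W^{KQ,(l)}\in\mathbb{R}^{m\times m}$ be the layer-$l$ parameter matrices, and let $\theta^{(l)}=\{W^{PV,(l)},W^{KQ,(l)},\rho=1\}$. For an input $E^{(0)}=\begin{pmatrix} d^{(0)} & q^{(0)}\end{pmatrix}\in\mathbb{R}^{m\times 2}$ (a demonstration column $d^{(0)}$ and a query column $q^{(0)}$), define recursively $E^{(l)}=f_{LSA}(E^{(l-1)};\theta^{(l-1)})$ for $l=1,\dots,L$, where $f_{LSA}(E;\theta)=E+W^{PV}E\,E^{\top}W^{KQ}E$, and write $E^{(l)}=\begin{pmatrix} d^{(l)} & q^{(l)}\end{pmatrix}$. Assume that for every $l=1,\dots,L$ there exist strictly increasing functions $g_l,h_l:\mathbb{R}_{\ge 0}\to\mathbb{R}_{\ge 0}$ such that for every input (every demonstration $d^{(0)}$ and query $q^{(0)}$) $$\Vert W^{PV,(l)} d^{(l)}\Vert = g_l\bigl(\Vert W^{PV,(l-1)} d^{(l-1)}\Vert\bigr),\qquad \Vert (d^{(l)})^{\top}W^{KQ,(l)}q^{(l)}\Vert = h_l\bigl(\Vert (d^{(l-1)})^{\top}W^{KQ,(l-1)}q^{(l-1)}\Vert\bigr).$$ Let $q$ be a query and let $d_1,d_2$ be two demonstrations; for $i=1,2$ let $d_i^{(l)},q_i^{(l)}$ denote the columns of $E^{(l)}$ obtained from the input $E_i^{(0)}=\begin{pmatrix} d_i & q\end{pmatrix}$. If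 $d_1\succcurlyeq_{q;\theta^{(0)}} d_2$, i.e. $$\Vert W^{PV,(0)}d_1\Vert\ge \Vert W^{PV,(0)}d_2\Vert\quad\text{and}\quad \Vert d_1^{\top}W^{KQ,(0)}q\Vert\ge \Vert d_2^{\top}W^{KQ,(0)}q\Vert,$$ then for every $l=1,\dots,L$, $d_1^{(l)}\succcurlyeq_{q;\theta^{(l)}} d_2^{(l)}$, i.e. $$\Vert W^{PV,(l)}d_1^{(l)}\Vert\ge \Vert W^{PV,(l)}d_2^{(l)}\Vert\quad\text{and}\quad \Vert (d_1^{(l)})^{\top}W^{KQ,(l)}q_1^{(l)}\Vert\ge \Vert (d_2^{(l)})^{\top}W^{KQ,(l)}q_2^{(l)}\Vert.$$
   Context: $\Vert\cdot\Vert$ denotes the Frobenius norm (for vectors the Euclidean norm, for scalars the absolute value). A demonstration is a column vector $d=\begin{pmatrix} d_x\\ d_y\end{pmatrix}$ consisting of an input part $d_x$ and an output part $d_y$; a query is a column $q=\begin{pmatrix} q_x\\ q_y\end{pmatrix}$ with $q_y=0$. Demonstration effectiveness: given a query $q$ and parameters $\theta=\{W^{PV},W^{KQ},\rho\}$, one writes $d_1\succcurlyeq_{q;\theta}d_2$ if $\Vert W^{PV}d_1\Vert\ge\Vert W^{PV}d_2\Vert$ and $\Vert d_1^{\top}W^{KQ}q\Vert\ge\Vert d_2^{\top}W^{KQ}q\Vert$. At layer $l$ the query is the layer-$l$ query column $q^{(l)}$ of the corresponding input. *)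

From HB Require Import structures.
From mathcomp Require Import all_boot all_order all_algebra.
Set Implicit Arguments. Unset Strict Implicit. Unset Printing Implicit Defensive.
Import Order.TTheory GRing.Theory Num.Theory.
Local Open Scope ring_scope.

(* Frobenius norm of a p x r matrix (Euclidean norm for vectors,
   absolute value for 1x1 matrices). *)
Definition frob (R : rcfType) (p r : nat) (A : 'M[R]_(p, r)) : R :=
  Num.sqrt (\sum_(i < p) \sum_(j < r) A i j ^+ 2).

Definition f_LSA (R : rcfType) (m : nat) (WPV WKQ : 'M[R]_m)
  (E : 'M[R]_(m, 2)) : 'M[R]_(m, 2) :=
  E + WPV *m E *m E^T *m WKQ *m E.

Fixpoint layer (R : rcfType) (m : nat) (WPV WKQ : nat -> 'M[R]_m)
  (E0 : 'M[R]_(m, 2)) (l : nat) : 'M[R]_(m, 2) :=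
  match l with
  | 0 => E0
  | l'.+1 => f_LSA (WPV l') (WKQ l') (layer WPV WKQ E0 l')
  end.

Definition input (R : rcfType) (m : nat) (d q : 'cV[R]_m) : 'M[R]_(m, 2) :=
  row_mx d q.

Definition dcol (R : rcfType) (m : nat) (E : 'M[R]_(m, 2)) : 'cV[R]_m :=
  col ord0 E.
Definition qcol (R : rcfType) (m : nat) (E : 'M[R]_(m, 2)) : 'cV[R]_m :=
  col ord_max E.

Definition more_effective (R : rcfType) (m : nat) (WPV WKQ : 'M[R]_m)
  (q d1 d2 : 'cV[R]_m) : Prop :=
  frob (WPV *m d1) >= frob (WPV *m d2) /\
  frob (d1^T *m WKQ *m q) >= frob (d2^T *m WKQ *m q).

Definition strict_incr_nonneg (R : rcfType) (g : R -> R) : Prop :=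
  (forall x, 0 <= x -> 0 <= g x) /\
  (forall x y, 0 <= x -> x < y -> g x < g y).

From HB Require Import structures.
From mathcomp Require Import all_boot all_order all_algebra.
Import Order.TTheory GRing.Theory Num.Theory.
Local Open Scope ring_scope.

(* Both effectiveness scores of layer l are obtained from those of layer l-1
   by the same increasing map for every input, so the order between two
   inputs' scores at layer 0 propagates layer by layer. *)

Lemma dcol_input (R : rcfType) (m : nat) (d q : 'cV[R]_m) :
  dcol (input d q) = d.
Proof.
apply/matrixP=> i j; rewrite !mxE /=.
have -> : (ord0 : 'I_(1 + 1)) = lshift 1 (ord0 : 'I_1) by exact: val_inj.
by rewrite (unsplitK (inl _)) (ord1 j).
Qed.

Lemma qcol_input (R : rcfType) (m : nat) (d q : 'cV[R]_m) :
  qcol (input d q) = q.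
Proof.
apply/matrixP=> i j; rewrite !mxE /=.
have -> : (ord_max : 'I_(1 + 1)) = rshift 1 (ord0 : 'I_1) by exact: val_inj.
by rewrite (unsplitK (inr _)) (ord1 j).
Qed.

Lemma frob_ge0 (R : rcfType) (p r : nat) (A : 'M[R]_(p, r)) : 0 <= frob A.
Proof. exact: sqrtr_ge0. Qed.

Lemma strict_incr_nonneg_le (R : rcfType) (g : R -> R) (x y : R) :
  strict_incr_nonneg g -> 0 <= x -> x <= y -> g x <= g y.
Proof.
move=> [_ g_incr] x_ge0; rewrite le_eqVlt => /predU1P[-> // | lt_xy].
exact/ltW/g_incr.
Qed.

Lemma le_iterate_strict_incr {R : rcfType} {L : nat} (s1 s2 : nat -> R) :
  (forall l, 0 <= s2 l) ->
  (forall l, (1 <= l <= L)%N -> exists g : R -> R,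
     [/\ strict_incr_nonneg g, s1 l = g (s1 l.-1) & s2 l = g (s2 l.-1)]) ->
  s2 0%N <= s1 0%N -> forall l, (l <= L)%N -> s2 l <= s1 l.
Proof.
move=> s2_ge0 step le0; elim=> [// | l IHl] lL.
have [g [g_incr -> ->]] := step l.+1 lL.
exact: strict_incr_nonneg_le (IHl (ltnW lL)).
Qed.

Definition pv_score {R : rcfType} {m : nat} (WPV WKQ : nat -> 'M[R]_m)
    (E0 : 'M[R]_(m, 2)) (l : nat) : R :=
  frob (WPV l *m dcol (layer WPV WKQ E0 l)).

Definition kq_score {R : rcfType} {m : nat} (WPV WKQ : nat -> 'M[R]_m)
    (E0 : 'M[R]_(m, 2)) (l : nat) : R :=
  let E := layer WPV WKQ E0 l in frob ((dcol E)^T *m WKQ l *m qcol E).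

Theorem lemma1 (R : rcfType) (m L : nat) (WPV WKQ : nat -> 'M[R]_m) :
  (1 <= L)%N ->
  (forall l, (1 <= l <= L)%N ->
     exists g h : R -> R,
       strict_incr_nonneg g /\ strict_incr_nonneg h /\
       forall d0 q0 : 'cV[R]_m,
         let E := layer WPV WKQ (input d0 q0) in
         frob (WPV l *m dcol (E l)) =
           g (frob (WPV l.-1 *m dcol (E l.-1))) /\
         frob ((dcol (E l))^T *m WKQ l *m qcol (E l)) =
           h (frob ((dcol (E l.-1))^T *m WKQ l.-1 *m qcol (E l.-1)))) ->
  forall q d1 d2 : 'cV[R]_m,
    more_effective (WPV 0%N) (WKQ 0%N) q d1 d2 ->
    forall l, (1 <= l <= L)%N ->
      let E1 := layer WPV WKQ (input d1 q) l in
      let E2 := layer WPV WKQ (input d2 q) l in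
      frob (WPV l *m dcol E1) >= frob (WPV l *m dcol E2) /\
      frob ((dcol E1)^T *m WKQ l *m qcol E1) >=
        frob ((dcol E2)^T *m WKQ l *m qcol E2).
Proof.
move=> _ layer_step q d1 d2 [pv0 kq0] l /andP[_ lL].
cbv zeta; split.
- change (pv_score WPV WKQ (input d2 q) l <= pv_score WPV WKQ (input d1 q) l).
  apply: le_iterate_strict_incr lL.
  + by move=> k; exact: frob_ge0.
  + move=> k kL; have [g [h [g_incr [_ E_step]]]] := layer_step k kL.
    by exists g; split; [| exact: proj1 (E_step d1 q) | exact: proj1 (E_step d2 q)].
  + by rewrite /pv_score /= !dcol_input.
- change (kq_score WPV WKQ (input d2 q) l <= kq_score WPV WKQ (input d1 q) l).
  apply: le_iterate_strict_incr lL.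
  + by move=> k; exact: frob_ge0.
  + move=> k kL; have [g [h [_ [h_incr E_step]]]] := layer_step k kL.
    by exists h; split; [| exact: proj2 (E_step d1 q) | exact: proj2 (E_step d2 q)].
  + by rewrite /kq_score /= !dcol_input !qcol_input.
Qed.
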